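(* Let $\mathcal{A}$ be a totally negative $2$-Calabi–Yau Abelian category. Then the Ext-quiver of any $\Sigma$-collection in $\mathcal{A}$ is the double of a totally negative quiver.
   Context: $\mathcal{A}$ is a $\mathbf{C}$-linear Abelian category with finite-dimensional Ext spaces; it is $2$-Calabi–Yau in the sense that for all objects $M,N$ one has $\operatorname{Ext}^i(M,N)=0$ for $i\notin\{0,1,2\}$ and functorial nondegenerate pairings $\operatorname{Ext}^i(M,N)\otimes\operatorname{Ext}^{2-i}(N,M)\to\mathbf{C}$ (as induced by a right $2$-Calabi–Yau structure on a dg enhancement), so that $\operatorname{ext}^1(M,N)=\operatorname{ext}^1(N,M)$ and $\operatorname{ext}^1(M,M)$ is even. The Euler form is $(M,N)=\sum_i(-1)^i\dim\operatorname{Ext}^i(M,N)$, and $\mathcal{A}$ is totally negative if $(M,N)<0$ for all nonzero $M,N$. An object $\mathcal{F}$ is a $\Sigma$-object if $\dim\operatorname{Ext}^0(\mathcal{F},\mathcal{F})=\dim\operatorname{Ext}^2(\mathcal{F},\mathcal{F})=1$, $\dim\operatorname{Ext}^1(\mathcal{F},\mathcal{F})$ is even and $\operatorname{Ext}^i(\mathcal{F},\mathcal{F})=0$ otherwise; a $\Sigma$-collection is a finite set $\{\mathcal{F}_1,\dots,\mathcal{F}_r\}$ of $\Sigma$-objects with $\operatorname{Hom}(\mathcal{F}_m,\mathcal{F}_n)=0$ for $m\neq n$. Its Ext-quiver has vertices $\mathcal{F}_1,\dots,\mathcal{F}_r$ and $\dim\operatorname{Ext}^1(\mathcal{F}_i,\mathcal{F}_j)$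 arrows from $\mathcal{F}_i$ to $\mathcal{F}_j$. The double of a quiver $Q$ adds an opposite arrow for each arrow; a quiver is totally negative if every vertex carries at least two loops and any two distinct vertices are joined by at least one arrow. *)

From mathcomp Require Import all_boot all_order all_algebra.
Set Implicit Arguments. Unset Strict Implicit. Unset Printing Implicit Defensive.
Import GRing.Theory Num.Theory.

(* Abstract Ext-dimension data of a C-linear 2-Calabi-Yau Abelian category.
   Obj : objects; is_zero : zero objects; ext i M N = dim_C Ext^i(M,N).
   The axioms are facts valid in every such category. *)
Record CY2Data := {
  Obj : Type;
  is_zero : Obj -> Prop;
  ext : nat -> Obj -> Obj -> nat;
  zero_hom : forall M, is_zero M -> ext 0 M M = 0%N;
  ext_vanish : forall i M N, (2 < i)%N -> ext i M N = 0%N;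
  serre : forall i M N, (i <= 2)%N -> ext i M N = ext (2 - i) N M;
  ext1_self_even : forall M, ~~ odd (ext 1 M M)
}.

(* Euler form (M,N) = sum_i (-1)^i dim Ext^i(M,N) (only i = 0,1,2 can be nonzero) *)
Definition euler (A : CY2Data) (M N : Obj A) : int :=
  (\sum_(i < 3) (-1) ^+ i * (@ext A i M N)%:Z)%R.

Definition totally_negative_cat (A : CY2Data) : Prop :=
  forall M N : Obj A, ~ @is_zero A M -> ~ @is_zero A N -> (euler M N < 0)%R.

Definition sigma_object (A : CY2Data) (F : Obj A) : Prop :=
  [/\ @ext A 0 F F = 1%N, @ext A 2 F F = 1%N, ~~ odd (@ext A 1 F F)
    & forall i, (2 < i)%N -> @ext A i F F = 0%N].

Definition sigma_collection (A : CY2Data) (r : nat) (F : 'I_r -> Obj A) : Prop :=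
  (forall i, sigma_object (F i)) /\
  (forall m n, m != n -> @ext A 0 (F m) (F n) = 0%N).

(* A quiver on vertex set 'I_r, given by its numbers of arrows i -> j *)
Definition quiver (r : nat) := 'I_r -> 'I_r -> nat.

Definition ext_quiver (A : CY2Data) (r : nat) (F : 'I_r -> Obj A) : quiver r :=
  fun i j => @ext A 1 (F i) (F j).

(* double: add an opposite arrow for every arrow (a loop yields another loop) *)
Definition double_quiver (r : nat) (Q : quiver r) : quiver r :=
  fun i j => (Q i j + Q j i)%N.

Definition totally_negative_quiver (r : nat) (Q : quiver r) : Prop :=
  (forall i, (2 <= Q i i)%N) /\
  (forall i j, i != j -> (1 <= Q i j + Q j i)%N).

(* In a 2-Calabi-Yau category Serre duality makes the Ext-quiver of any family symmetric,
   and for Sigma-objects it has an even number of loops at each vertex, so it is the double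
   of the quiver keeping the arrows i -> j for i < j and half of the loops.  Total negativity
   of the Euler form then gives (F,F) = 2 - ext^1(F,F) < 0, i.e. at least 4 loops in the
   Ext-quiver and hence 2 in the halved quiver, and (F_i,F_j) = -ext^1(F_i,F_j) < 0 for
   i <> j since Hom and (by duality) Ext^2 vanish between distinct members. *)
From mathcomp Require Import all_boot all_order all_algebra.
From mathcomp Require Import zify ring.

Set Implicit Arguments.
Unset Strict Implicit.
Unset Printing Implicit Defensive.

Import GRing.Theory Num.Theory.

Section HalfQuiver.

Variables (r : nat) (Q : quiver r).

Definition half_quiver : quiver r :=
  fun i j => if (i < j)%N then Q i j else if i == j then (Q i i)./2 else 0%N.

Hypothesis Q_sym : forall i j, Q i j = Q j i.
Hypothesis Q_loops_even : forall i, ~~ odd (Q i i).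

Lemma double_half_quiver i j : double_quiver half_quiver i j = Q i j.
Proof.
rewrite /double_quiver /half_quiver.
case: (ltngtP i j) => [lt_ij|lt_ji|/val_inj <-].
- by rewrite -val_eqE (gtn_eqF lt_ij) addn0.
- by rewrite -val_eqE (gtn_eqF lt_ji) add0n Q_sym.
- by rewrite eqxx addnn -[RHS]odd_double_half (negbTE (Q_loops_even i)).
Qed.

Lemma totally_negative_half_quiver :
  (forall i, 4 <= Q i i)%N -> (forall i j, i != j -> 0 < Q i j)%N ->
  totally_negative_quiver half_quiver.
Proof.
move=> Q_loops Q_conn; split=> [i | i j ij].
- by rewrite /half_quiver ltnn eqxx; exact: half_leq (Q_loops i).
- by have := double_half_quiver i j; rewrite /double_quiver => ->; exact: Q_conn.
Qed.

End HalfQuiver.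

Section TotallyNegativeCY2.

Variable A : CY2Data.
Implicit Types M N : Obj A.

Lemma euler_expand M N :
  euler M N = ((ext 0 M N)%:Z - (ext 1 M N)%:Z + (ext 0 N M)%:Z)%R.
Proof.
rewrite /euler !big_ord_recr big_ord0 /= expr0 expr1 expr2 (@serre A 2) //.
ring.
Qed.

Lemma ext1C M N : ext 1 M N = ext 1 N M.
Proof. by rewrite (@serre A 1). Qed.

Lemma sigma_object_nonzero {F : Obj A} : sigma_object F -> ~ is_zero F.
Proof. by case=> hom1 _ _ _ /zero_hom; rewrite hom1. Qed.

Hypothesis A_neg : totally_negative_cat A.

Lemma double_ext0_lt_ext1 {M} : ~ is_zero M -> ((ext 0 M M).*2 < ext 1 M M)%N.
Proof.
move=> nzM; have := A_neg nzM nzM.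
by rewrite euler_expand -ltz_nat; lia.
Qed.

Lemma ext1_gt0_of_hom0 {M N} : ~ is_zero M -> ~ is_zero N ->
  ext 0 M N = 0%N -> ext 0 N M = 0%N -> (0 < ext 1 M N)%N.
Proof.
move=> nzM nzN homMN homNM; have := A_neg nzM nzN.
by rewrite euler_expand homMN homNM; lia.
Qed.

Lemma sigma_object_ext1_ge4 {F : Obj A} : sigma_object F -> (4 <= ext 1 F F)%N.
Proof.
move=> sF; have := double_ext0_lt_ext1 (sigma_object_nonzero sF).
case: sF => -> _ even_ext1 _.
have := odd_double_half (ext 1 F F); rewrite (negbTE even_ext1) add0n; lia.
Qed.

End TotallyNegativeCY2.

Theorem proposition7p1 (A : CY2Data) (HA : totally_negative_cat A)
  (r : nat) (F : 'I_r -> Obj A) (HF : sigma_collection F) :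
  exists Q : quiver r, totally_negative_quiver Q /\
    (forall i j, ext_quiver F i j = double_quiver Q i j).
Proof.
case: HF => sigmaF homF.
have sym i j : ext_quiver F i j = ext_quiver F j i by exact: ext1C.
have loops_even i : ~~ odd (ext_quiver F i i) by case: (sigmaF i).
exists (half_quiver (ext_quiver F)); split.
- apply: totally_negative_half_quiver => // [i | i j ij].
  + exact: (sigma_object_ext1_ge4 HA (sigmaF i)).
  + apply: (ext1_gt0_of_hom0 HA (sigma_object_nonzero (sigmaF i))
                             (sigma_object_nonzero (sigmaF j))).
    * exact: homF.
    * by apply: homF; rewrite eq_sym.
- by move=> i j; rewrite double_half_quiver.
Qed.
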